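(* Let $n\ge 1$ and let $\mathcal{M}^n$ denote the set of real symmetric positive semidefinite $n\times n$ matrices. Let $F:(\mathcal{M}^n)^n\to\mathbb{R}$ be a function such that (i) $F(A_1,\dots,A_n)\ge 0$ for all $A_1,\dots,A_n\in\mathcal{M}^n$; (ii) $F$ is additive in each variable, i.e. $F(\dots,A+A',\dots)=F(\dots,A,\dots)+F(\dots,A',\dots)$ in each argument, the other arguments being fixed; (iii) $F(A_1,\dots,A_n)=0$ whenever two of the arguments $A_i,A_j$ ($i\neq j$) are proportional matrices of rank one. Then there is a constant $a\ge 0$ such that $F(A_1,\dots,A_n)=a\,D(A_1,\dots,A_n)$ for all $A_1,\dots,A_n\in\mathcal{M}^n$, where $D$ is the mixed discriminant.
   Context: The mixed discriminant $D:(\mathcal{M}^n)^n\to\mathbb{R}$ is the unique symmetric function such that $\det(\lambda_1A_1+\dots+\lambda_mA_m)=\sum_{i_1,\dots,i_n=1}^m\lambda_{i_1}\cdots\lambda_{i_n}D(A_{i_1},\dots,A_{i_n})$ for all $m\in\mathbb{N}$, $A_1,\dots,A_m\in\mathcal{M}^n$ and $\lambda_1,\dots,\lambda_m\ge 0$. Equivalently, $D(A_1,\dots,A_n)=\frac{1}{n!}\sum_{\sigma\in S(n)}\det(A_{\sigma(1)}^{(1)},\dots,A_{\sigma(n)}^{(n)})$, where $A^{(i)}$ denotes the $i$th column of $A$ and $S(n)$ is the symmetric group. *)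

From HB Require Import structures.
From mathcomp Require Import all_boot all_order all_algebra all_fingroup.
From mathcomp Require Import reals.
Set Implicit Arguments. Unset Strict Implicit. Unset Printing Implicit Defensive.
Import Order.TTheory GRing.Theory Num.Theory.
Local Open Scope ring_scope.

Definition psd (R : realType) (n : nat) (A : 'M[R]_n) : Prop :=
  A^T = A /\ forall v : 'cV[R]_n, 0 <= (v^T *m A *m v) 0 0.

Definition mixed_discr (R : realType) (n : nat) (A : 'I_n -> 'M[R]_n) : R :=
  (n`!%:R)^-1 * \sum_(s : 'S_n) \det (\matrix_(i, j) A (s j) i j).

Definition upd (R : realType) (n : nat) (A : 'I_n -> 'M[R]_n) (i : 'I_n) (X : 'M[R]_n)
  : 'I_n -> 'M[R]_n := fun j => if j == i then X else A j.

From HB Require Import structures.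
From mathcomp Require Import all_boot all_order all_algebra all_fingroup.
From mathcomp Require Import reals ring lra.
Set Implicit Arguments. Unset Strict Implicit. Unset Printing Implicit Defensive.
Import Order.TTheory GRing.Theory Num.Theory.
Local Open Scope ring_scope.

(* Writing every psd matrix as a sum of matrices u u^T and using additivity, F
   is determined by its values on rank-one families, i.e. by
   Fcol V := F (v_1 v_1^T, ..., v_n v_n^T) where v_1, ..., v_n are the columns
   of V; on such families the mixed discriminant is det(V)^2 / n!.  So it
   suffices to show Fcol V = Fcol 1 * det(V)^2.  In each column, Fcol is
   nonnegative, 2-homogeneous and satisfies the parallelogram law; as it
   vanishes when a column is proportional to another one, the parallelogram
   law forces it to be invariant under adding to a column a multiple of
   another one.  Hence Fcol vanishes on singular matrices, is invariant under
   column swaps, and gets multiplied by c^2 when a column is replaced by a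
   vector whose coordinate along it is c; reducing V column by column to the
   identity gives the formula. *)

Section RealFunctions.
Variable R : realType.

Lemma natmul_bounded_le0 (x c : R) : (forall N : nat, N%:R * x <= c) -> x <= 0.
Proof.
move=> bnd; rewrite leNgt; apply/negP => x_gt0.
have := bnd (Num.truncn (c / x)).+1.
by rewrite -ler_pdivlMr // leNgt truncnS_gt.
Qed.

Lemma additive_nonneg_homogeneous (f : R -> R) :
    (forall s, 0 <= s -> 0 <= f s) ->
    (forall s u, 0 <= s -> 0 <= u -> f (s + u) = f s + f u) ->
  forall t, 0 <= t -> f t = t * f 1.
Proof.
move=> f_ge0 fD t t_ge0.
have f0 : f 0 = 0 by apply: (addrI (f 0)); rewrite -fD ?addr0.
have f_natmul m : f m%:R = m%:R * f 1.
  elim: m => [|m IH]; first by rewrite mul0r.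
  by rewrite -natr1 fD ?ler0n // IH mulrDl mul1r.
have f_natmulr m s : 0 <= s -> f (m%:R * s) = m%:R * f s.
  move=> s_ge0; elim: m => [|m IH]; first by rewrite !mul0r.
  by rewrite -natr1 !mulrDl !mul1r fD ?IH // mulr_ge0.
have f_mono s u : 0 <= s -> s <= u -> f s <= f u.
  move=> s_ge0 le_su; have su_ge0 : 0 <= u - s by rewrite subr_ge0.
  by rewrite -(subrK s u) fD // lerDr f_ge0.
have f1_ge0 := f_ge0 1 ler01.
have squeeze N : N%:R * f t <= N%:R * t * f 1 + f 1 /\ N%:R * t * f 1 <= N%:R * f t + f 1.
  set k := Num.truncn (N%:R * t).
  have Nt_ge0 : 0 <= N%:R * t by rewrite mulr_ge0.
  have k_le : k%:R <= N%:R * t by rewrite truncn_le.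
  have k_gt : N%:R * t < k.+1%:R by apply: truncnS_gt.
  have lo := f_mono _ _ (ler0n _ k) k_le.
  have hi := f_mono _ _ Nt_ge0 (ltW k_gt).
  rewrite !f_natmul f_natmulr // in lo hi.
  have lo' := ler_wpM2r f1_ge0 k_le.
  have hi' := ler_wpM2r f1_ge0 (ltW k_gt).
  move: lo hi lo' hi'; rewrite -natr1 mulrDl mul1r => *; split; lra.
apply/eqP; rewrite eq_le -subr_le0 -[t * f 1 <= _]subr_le0.
apply/andP; split; apply: (natmul_bounded_le0 (c := f 1)) => N;
  have [] := squeeze N; rewrite mulrBr mulrA; lra.
Qed.

Lemma affine_seq_ge0_le01 (u : nat -> R) :
    (forall k, 0 <= u k) -> (forall k, u k.+2 + u k = u k.+1 + u k.+1) ->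
  u 0 <= u 1.
Proof.
move=> u_ge0 u_rec; set d := u 1 - u 0.
have u_affine k : u k = u 0 + k%:R * d.
  suff [] : u k = u 0 + k%:R * d /\ u k.+1 = u 0 + k.+1%:R * d by [].
  elim: k => [|k [IHk IHk1]]; first by rewrite mul0r addr0 mul1r /d addrC subrK.
  split=> //; have := u_rec k; rewrite IHk IHk1 -!natr1; lra.
rewrite -subr_ge0 -/d -oppr_le0; apply: (natmul_bounded_le0 (c := u 0)) => N.
by have := u_ge0 N; rewrite u_affine mulrN; lra.
Qed.

Lemma parallelogram_null_shift (V : zmodType) (Q : V -> R) :
    (forall x, 0 <= Q x) ->
    (forall x y, Q (x + y) + Q (x - y) = Q x + Q x + Q y + Q y) ->
  forall x y, Q y = 0 -> Q (x + y) = Q x.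
Proof.
move=> Q_ge0 Q_par x y Qy0.
have shift_ge z : Q z = 0 -> Q x <= Q (x + z).
  move=> Qz0.
  have := affine_seq_ge0_le01 (u := fun k => Q (x + z *+ k)).
  rewrite /= addr0 mulr1n; apply=> [k|k]; first exact: Q_ge0.
  have := Q_par (x + z *+ k.+1) z.
  rewrite Qz0 !addr0 -addrA -mulrSr.
  by rewrite (_ : x + z *+ k.+1 - z = x + z *+ k) // mulrSr addrA addrK.
have Q0 : Q 0 = 0 by have := Q_par 0 0; rewrite !addr0 subr0; lra.
have QNy : Q (- y) = 0 by have := Q_par 0 y; rewrite add0r sub0r Q0 Qy0; lra.
have := shift_ge _ Qy0; have := shift_ge _ QNy; have := Q_par x y.
rewrite Qy0 addr0; lra.
Qed.

End RealFunctions.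

Section ColumnReplacement.
Variables (T : Type) (m n : nat).
Implicit Types (V : 'M[T]_(m, n)) (x y : 'cV[T]_m).

Definition setcol V (i : 'I_n) x : 'M[T]_(m, n) :=
  \matrix_(a, b) if b == i then x a 0 else V a b.

Lemma col_setcol V i x : col i (setcol V i x) = x.
Proof. by apply/matrixP => a b; rewrite (ord1 b) !mxE eqxx. Qed.

Lemma col_setcol_neq V i j x : j != i -> col j (setcol V i x) = col j V.
Proof. by move=> ji; apply/matrixP => a b; rewrite !mxE (negPf ji). Qed.

Lemma setcol_col V i : setcol V i (col i V) = V.
Proof. by apply/matrixP => a b; rewrite !mxE; case: eqP => // ->. Qed.

Lemma setcolK V i x y : setcol (setcol V i x) i y = setcol V i y.
Proof. by apply/matrixP => a b; rewrite !mxE; case: eqP. Qed.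

Lemma setcolC V i k x y :
  i != k -> setcol (setcol V i x) k y = setcol (setcol V k y) i x.
Proof.
move=> ik; apply/matrixP => a b; rewrite !mxE.
by case: (eqVneq b k) => [->|//]; rewrite eq_sym (negPf ik).
Qed.

Lemma eq_col_matrix (A B : 'M[T]_(m, n)) : (forall j, col j A = col j B) -> A = B.
Proof.
move=> eq_col; apply/matrixP => a b.
by have /matrixP/(_ a 0) := eq_col b; rewrite !mxE.
Qed.

Lemma col_xcol V i k j : col j (xcol i k V) = col (tperm i k j) V.
Proof. by apply/matrixP => a b; rewrite !mxE. Qed.

Lemma xcol_setcol V i k : xcol i k V = setcol (setcol V i (col k V)) k (col i V).
Proof.
apply: eq_col_matrix => j; rewrite col_xcol.
have [->|jk] := eqVneq j k; first by rewrite tpermR col_setcol.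
rewrite col_setcol_neq //; have [->|ji] := eqVneq j i; first by rewrite tpermL col_setcol.
by rewrite col_setcol_neq // tpermD // eq_sym.
Qed.

End ColumnReplacement.

Section ColumnReplacementDet.
Variables (K : fieldType) (n : nat).
Implicit Types (V : 'M[K]_n) (c x : 'cV[K]_n).

Lemma mulmx_col_sum V c : V *m c = \sum_j c j 0 *: col j V.
Proof.
apply/matrixP => a b; rewrite (ord1 b) !mxE summxE; apply: eq_bigr => j _.
by rewrite !mxE mulrC.
Qed.

Lemma setcol_mulmx V i c : setcol V i (V *m c) = V *m setcol 1%:M i c.
Proof.
apply/matrixP => a b; rewrite !mxE; case: eqP => [->|/eqP bi].
  by apply: eq_bigr => k _; rewrite !mxE eqxx.
rewrite -{1}[V](mulmx1 V) mxE; apply: eq_bigr => k _.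
by rewrite !mxE (negPf bi).
Qed.

Lemma det_setcol1 i c : \det (setcol 1%:M i c) = c i 0.
Proof.
rewrite (expand_det_row _ i) (bigD1 i) //= big1 ?addr0 /cofactor; last first.
  by move=> j ji; rewrite !mxE (negPf ji) eq_sym (negPf ji) mul0r.
have -> : row' i (col' i (setcol 1%:M i c)) = 1%:M.
  apply/matrixP => a b; rewrite !mxE eq_sym (negPf (neq_lift _ _)).
  by rewrite (inj_eq lift_inj).
by rewrite !mxE eqxx det1 addnn -signr_odd odd_double !mulr1.
Qed.

Lemma det_setcol V i x :
  V \in unitmx -> \det (setcol V i x) = (invmx V *m x) i 0 * \det V.
Proof.
by move=> V_unit; rewrite -{1}(mulKVmx V_unit x) setcol_mulmx det_mulmx det_setcol1 mulrC.
Qed.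

Lemma det0_col_dependent V :
  \det V = 0 -> exists i (c : 'I_n -> K), col i V = \sum_(j | j != i) c j *: col j V.
Proof.
rewrite -det_tr => /eqP/det0P[w w_neq0 wV0].
have [i wi_neq0] : exists i, w 0 i != 0.
  apply/existsP; apply: contraR w_neq0 => /existsPn w0.
  by apply/eqP/rowP => j; rewrite mxE; apply/eqP; rewrite -[_ == _]negbK w0.
exists i, (fun j => - w 0 j / w 0 i).
have : V *m w^T = 0 by rewrite -[V]trmxK -trmx_mul wV0 trmx0.
rewrite mulmx_col_sum (bigD1 i) //= => /(canRL (addrK _)); rewrite sub0r => dep.
apply: (scalerI wi_neq0); move: dep; rewrite mxE => ->.
rewrite scaler_sumr -sumrN; apply: eq_bigr => j _.
by rewrite scalerA mxE mulrCA mulfV // mulr1 scaleNr.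
Qed.

Lemma unitmx_tail_pivot V (k : 'I_n) :
    V \in unitmx -> (forall j : 'I_n, (k < j)%N -> col j V = col j 1%:M) ->
  exists2 i : 'I_n, (i <= k)%N & (invmx V *m col k 1%:M) i 0 != 0.
Proof.
move=> V_unit V_tail; apply/exists_inP; apply: contraT => /exists_inPn c0.
have /matrixP/(_ k 0) := mulKVmx V_unit (col k 1%:M).
rewrite mulmx_col_sum summxE !mxE eqxx big1 => [/eqP|j _]; first by rewrite eq_sym oner_eq0.
have [jk|kj] := leqP j k; first by rewrite (eqP (negPn (c0 j jk))) scale0r mxE.
rewrite V_tail // !mxE; suff /negPf-> : k != j by rewrite mulr0.
by rewrite -val_eqE /= neq_ltn kj.
Qed.

End ColumnReplacementDet.

Section PositiveSemidefinite.
Variables (R : realType) (n : nat).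
Implicit Types (A : 'M[R]_n) (u v w x : 'cV[R]_n).

Definition outer v : 'M[R]_n := v *m v^T.

Definition bform A v w : R := (v^T *m A *m w) 0 0.

Lemma outer_entry v i j : outer v i j = v i 0 * v j 0.
Proof. by rewrite !mxE big_ord1 !mxE. Qed.

Lemma outer0 : outer 0 = 0.
Proof. by rewrite /outer mul0mx. Qed.

Lemma outerZ (c : R) v : outer (c *: v) = c ^+ 2 *: outer v.
Proof. by rewrite /outer linearZ /= -scalemxAl -scalemxAr scalerA expr2. Qed.

Lemma outer_parallelogram x y :
  outer (x + y) + outer (x - y) = outer x + outer x + outer y + outer y.
Proof. by apply/matrixP => a b; rewrite !mxE !big_ord1 !mxE; ring. Qed.

Lemma rank_outer v : v != 0 -> \rank (outer v) = 1%N.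
Proof.
move=> v_neq0; apply/eqP; rewrite eqn_leq (leq_trans (mxrankM_maxl _ _)) ?rank_leq_col //.
rewrite lt0n mxrank_eq0; apply: contra v_neq0 => /eqP/matrixP v0.
apply/eqP/matrixP => i j; rewrite (ord1 j) mxE; have := v0 i i.
rewrite outer_entry mxE => /eqP.
by rewrite mulf_eq0 orbb => /eqP.
Qed.

Lemma vdot_sym v w : (v^T *m w) 0 0 = (w^T *m v) 0 0.
Proof. by rewrite -[v^T *m w]trmxK trmx_mul trmxK mxE. Qed.

Lemma bform_outer u v : bform (outer u) v v = ((v^T *m u) 0 0) ^+ 2.
Proof.
by rewrite /bform /outer mulmxA -(mulmxA _ _ v) [LHS]mxE big_ord1 (vdot_sym u) expr2.
Qed.

Lemma psd0 : psd (0 : 'M[R]_n).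
Proof. by split=> [|v]; rewrite ?trmx0 // mulmx0 mul0mx mxE. Qed.

Lemma psdD A B : psd A -> psd B -> psd (A + B).
Proof.
move=> [A_sym A_ge0] [B_sym B_ge0]; split; first by rewrite linearD /= A_sym B_sym.
by move=> v; rewrite mulmxDr mulmxDl mxE addr_ge0.
Qed.

Lemma psdZ (t : R) A : 0 <= t -> psd A -> psd (t *: A).
Proof.
move=> t_ge0 [A_sym A_ge0]; split; first by rewrite linearZ /= A_sym.
by move=> v; rewrite -scalemxAr -scalemxAl mxE mulr_ge0.
Qed.

Lemma psd_outer v : psd (outer v).
Proof.
split=> [|w]; first by rewrite /outer trmx_mul trmxK.
by rewrite -/(bform _ w w) bform_outer sqr_ge0.
Qed.

Lemma psd_sum_outer (s : seq 'cV[R]_n) : psd (\sum_(u <- s) outer u).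
Proof.
elim: s => [|u s IH]; first by rewrite big_nil; exact: psd0.
by rewrite big_cons; apply: psdD; first exact: psd_outer.
Qed.

Lemma bform_expand A v x t :
  bform A (v + t *: x) (v + t *: x) =
  bform A v v + t * (bform A v x + bform A x v) + t ^+ 2 * bform A x x.
Proof.
rewrite /bform; have -> : (v + t *: x)^T = v^T + t *: x^T by rewrite linearD linearZ.
rewrite !mulmxDl !mulmxDr -!scalemxAl -!scalemxAr.
by rewrite !mxE; ring.
Qed.

Lemma bform_deltar A v k : bform A v (delta_mx k 0) = (v^T *m col k A) 0 0.
Proof. by rewrite /bform -mulmxA -colE. Qed.

Lemma bform_deltal A v k : bform A (delta_mx k 0) v = (row k A *m v) 0 0.
Proof. by rewrite /bform trmx_delta -rowE. Qed.

Lemma bform_delta A k j : bform A (delta_mx k 0) (delta_mx j 0) = A k j.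
Proof. by rewrite bform_deltal -colE !mxE. Qed.

Lemma psd_diag_eq0 A k j : psd A -> A k k = 0 -> A k j = 0.
Proof.
move=> [A_sym A_ge0] Akk0; have Ajk : A j k = A k j by rewrite -{1}A_sym mxE.
apply: contraTeq isT => Akj_neq0.
pose t := - (A j j + 1) / (2 * A k j).
have := A_ge0 (delta_mx j 0 + t *: delta_mx k 0).
rewrite -/(bform _ _ _) bform_expand !bform_delta Akk0 Ajk mulr0 addr0.
have -> : t * (A k j + A k j) = - (A j j + 1) by rewrite /t; field.
by rewrite opprD addrA subrr sub0r oppr_ge0 ler10.
Qed.

Lemma psd_sub_pivot_outer A k :
  psd A -> 0 < A k k -> psd (A - (A k k)^-1 *: outer (col k A)).
Proof.
move=> [A_sym A_ge0] p_gt0; set p := A k k; set a := col k A.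
split; first by rewrite linearB linearZ /= A_sym (psd_outer a).1.
move=> v; set s := (v^T *m a) 0 0.
have -> : (v^T *m (A - p^-1 *: outer a) *m v) 0 0 = bform A v v - p^-1 * bform (outer a) v v.
  by rewrite /bform mulmxBr mulmxBl -scalemxAr -scalemxAl !mxE.
rewrite bform_outer -/s.
have Avk : bform A v (delta_mx k 0) = s by rewrite bform_deltar.
have Akv : bform A (delta_mx k 0) v = s.
  by rewrite bform_deltal -{1}A_sym -tr_col -/a vdot_sym.
have := A_ge0 (v + (- s / p) *: delta_mx k 0).
rewrite -/(bform _ _ _) bform_expand Avk Akv bform_delta -/p.
suff -> : bform A v v + - s / p * (s + s) + (- s / p) ^+ 2 * p =
          bform A v v - p^-1 * s ^+ 2 by [].
by field; rewrite gt_eqF.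
Qed.

Lemma psd_sum_outers A : psd A -> exists s : seq 'cV[R]_n, A = \sum_(u <- s) outer u.
Proof.
(* Induction on the number [m] of possibly nonzero last rows: each step
   subtracts the rank-one part carried by the first of them. *)
suff zero_rows : forall m (A' : 'M[R]_n), psd A' ->
    (forall i j : 'I_n, (i < n - m)%N -> A' i j = 0) ->
    exists s : seq 'cV[R]_n, A' = \sum_(u <- s) outer u.
  by move=> A_psd; apply: (zero_rows n) => // i j; rewrite subnn.
elim=> [|m IH] A' A'_psd A'0.
  by exists [::]; rewrite big_nil; apply/matrixP => i j; rewrite mxE A'0 ?subn0.
have [nm|mn] := leqP n m.
  by apply: IH => // i j; move: nm; rewrite -subn_eq0 => /eqP->.
have k_lt : (n - m.+1 < n)%N by rewrite ltn_subrL (leq_ltn_trans _ mn).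
pose k := Ordinal k_lt.
have zero_row_k (i : 'I_n) : (i < n - m)%N -> (i < n - m.+1)%N \/ i = k.
  by rewrite -subnSK // ltnS leq_eqVlt => /orP[/eqP ik|]; [right; apply/val_inj|left].
have [Akk0|Akk_neq0] := eqVneq (A' k k) 0.
  apply: IH => // i j /zero_row_k[|->]; [exact: A'0 | exact: psd_diag_eq0].
have Akk_gt0 : 0 < A' k k.
  by rewrite lt_def Akk_neq0 /= -bform_delta A'_psd.2.
pose u := (Num.sqrt (A' k k))^-1 *: col k A'.
have outer_u : outer u = (A' k k)^-1 *: outer (col k A').
  by rewrite /u outerZ exprVn sqr_sqrtr // ltW.
have [s A'_sub] : exists s, A' - outer u = \sum_(w <- s) outer w.
  apply: IH; first by rewrite outer_u; exact: psd_sub_pivot_outer.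
  move=> i j /zero_row_k[ik|->]; rewrite outer_u !mxE big_ord1 !mxE.
    by rewrite (A'0 i j ik) (A'0 i k ik) mul0r mulr0 subrr.
  by rewrite mulrA mulVf // mul1r -{2}A'_psd.1 mxE subrr.
by exists (u :: s); rewrite big_cons -A'_sub addrC subrK.
Qed.

End PositiveSemidefinite.

Section Multiadditive.
Variables (R : realType) (n : nat).
Implicit Types (A : 'I_n -> 'M[R]_n) (V : 'M[R]_n).

Definition outer_cols V : 'I_n -> 'M[R]_n := fun j => outer (col j V).

Definition multiadditive (F : ('I_n -> 'M[R]_n) -> R) : Prop :=
  forall A i B C, (forall k, psd (A k)) -> psd B -> psd C ->
    F (upd A i (B + C)) = F (upd A i B) + F (upd A i C).

Lemma upd_psd A i X : (forall k, psd (A k)) -> psd X -> forall k, psd (upd A i X k).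
Proof. by move=> A_psd X_psd k; rewrite /upd; case: eqP. Qed.

Lemma upd_id A i : upd A i (A i) = A.
Proof. by apply: boolp.funext => j; rewrite /upd; case: eqP => // ->. Qed.

Lemma upd_outer_cols V i x : upd (outer_cols V) i (outer x) = outer_cols (setcol V i x).
Proof.
apply: boolp.funext => j; rewrite /upd /outer_cols.
by case: eqP => [->|/eqP ji]; rewrite ?col_setcol ?col_setcol_neq.
Qed.

Section Additive.
Variable F : ('I_n -> 'M[R]_n) -> R.
Hypothesis F_add : multiadditive F.

Lemma multiadditive_upd0 A i : (forall k, psd (A k)) -> F (upd A i 0) = 0.
Proof.
by move=> A_psd; have := F_add i A_psd (psd0 _ _) (psd0 _ _); rewrite addr0; lra.
Qed.

Lemma multiadditive_sum_outer A i (s : seq 'cV[R]_n) :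
    (forall k, psd (A k)) ->
  F (upd A i (\sum_(u <- s) outer u)) = \sum_(u <- s) F (upd A i (outer u)).
Proof.
move=> A_psd; elim: s => [|u s IH]; first by rewrite !big_nil multiadditive_upd0.
by rewrite !big_cons F_add ?IH //; [exact: psd_outer | exact: psd_sum_outer].
Qed.

End Additive.

Lemma multiadditive_eq_on_rank_one (F H : ('I_n -> 'M[R]_n) -> R) :
    multiadditive F -> multiadditive H ->
    (forall V, F (outer_cols V) = H (outer_cols V)) ->
  forall A, (forall k, psd (A k)) -> F A = H A.
Proof.
move=> F_add H_add eq_FH.
suff tail_rank_one m A V : (forall k, psd (A k)) ->
    (forall j : 'I_n, (m <= j)%N -> A j = outer (col j V)) -> F A = H A.
  by move=> A A_psd; apply: (tail_rank_one n A 0) => // j; rewrite leqNgt ltn_ord.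
elim: m A V => [|m IH] A V A_psd A_tail.
  by have -> : A = outer_cols V by apply: boolp.funext => j; apply: A_tail.
have [nm|mn] := leqP n m.
  by apply: (IH A V) => // j mj; move: (leq_trans nm mj); rewrite leqNgt ltn_ord.
pose k := Ordinal mn; have [s A_k] := psd_sum_outers (A_psd k).
rewrite -(upd_id A k) A_k !multiadditive_sum_outer //; apply: eq_bigr => u _.
apply: (IH _ (setcol V k u)); first by apply: upd_psd => //; exact: psd_outer.
move=> j mj; rewrite /upd; case: eqP => [->|/eqP jk]; first by rewrite col_setcol.
rewrite col_setcol_neq // A_tail // ltn_neqAle mj andbT.
by apply: contra jk => /eqP jm; apply/eqP/val_inj.
Qed.

End Multiadditive.

Section RankOneFamilies.
Variables (R : realType) (n : nat) (F : ('I_n -> 'M[R]_n) -> R).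
Hypothesis F_ge0 : forall A : 'I_n -> 'M[R]_n, (forall k, psd (A k)) -> 0 <= F A.
Hypothesis F_add : multiadditive F.
Hypothesis F_rank_one_proportional : forall (A : 'I_n -> 'M[R]_n) (i j : 'I_n),
  (forall k, psd (A k)) -> i != j -> \rank (A i) = 1%N -> \rank (A j) = 1%N ->
  (exists c : R, A i = c *: A j) -> F A = 0.
Implicit Types (V : 'M[R]_n) (x y : 'cV[R]_n).

Lemma multiadditive_homogeneous A i X t :
    (forall k, psd (A k)) -> psd X -> 0 <= t ->
  F (upd A i (t *: X)) = t * F (upd A i X).
Proof.
move=> A_psd X_psd; rewrite -[in RHS](scale1r X).
apply: (additive_nonneg_homogeneous (f := fun t => F (upd A i (t *: X)))).
  by move=> s s_ge0; apply/F_ge0/upd_psd/psdZ.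
by move=> s u s_ge0 u_ge0; rewrite scalerDl F_add //; exact: psdZ.
Qed.

Definition Fcol V := F (outer_cols V).

Lemma Fcol_setcol V i x : Fcol (setcol V i x) = F (upd (outer_cols V) i (outer x)).
Proof. by rewrite /Fcol upd_outer_cols. Qed.

Lemma outer_cols_psd V k : psd (outer_cols V k).
Proof. exact: psd_outer. Qed.

Lemma Fcol_ge0 V : 0 <= Fcol V.
Proof. exact/F_ge0/outer_cols_psd. Qed.

Lemma Fcol_col0 V i : col i V = 0 -> Fcol V = 0.
Proof.
move=> Vi0; rewrite -(setcol_col V i) Vi0 Fcol_setcol outer0.
exact/multiadditive_upd0/outer_cols_psd.
Qed.

Lemma Fcol_scale V i c x : Fcol (setcol V i (c *: x)) = c ^+ 2 * Fcol (setcol V i x).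
Proof.
rewrite !Fcol_setcol outerZ multiadditive_homogeneous ?sqr_ge0 //.
  exact: outer_cols_psd.
exact: psd_outer.
Qed.

Lemma Fcol_parallelogram V i x y :
  Fcol (setcol V i (x + y)) + Fcol (setcol V i (x - y)) =
  Fcol (setcol V i x) + Fcol (setcol V i x) + Fcol (setcol V i y) + Fcol (setcol V i y).
Proof.
have [V_psd outer_psd] := (@outer_cols_psd V, @psd_outer R n).
by rewrite !Fcol_setcol -F_add // outer_parallelogram !F_add //; do ![apply: psdD].
Qed.

Lemma Fcol_proportional V i j c : j != i -> col i V = c *: col j V -> Fcol V = 0.
Proof.
move=> ji Vi; have [Vj0|Vj_neq0] := eqVneq (col j V) 0; first exact: Fcol_col0 Vj0.
have [c0|c_neq0] := eqVneq c 0; first by apply: (Fcol_col0 (i := i)); rewrite Vi c0 scale0r.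
apply: (F_rank_one_proportional (i := i) (j := j)); rewrite 1?eq_sym //.
- exact: outer_cols_psd.
- by rewrite /outer_cols Vi rank_outer // scaler_eq0 negb_or c_neq0.
- exact: rank_outer.
- by exists (c ^+ 2); rewrite /outer_cols Vi outerZ.
Qed.

(* Nonnegativity and the parallelogram law make [x |-> Fcol (setcol V i x)]
   invariant under translation by its zeros, among them the multiples of the
   other columns. *)
Lemma Fcol_shear V i j x t :
  j != i -> Fcol (setcol V i (x + t *: col j V)) = Fcol (setcol V i x).
Proof.
move=> ji; apply: (parallelogram_null_shift (Q := fun x => Fcol (setcol V i x))).
- by move=> z; apply: Fcol_ge0.
- exact: Fcol_parallelogram.
- by apply: (Fcol_proportional ji (c := t)); rewrite col_setcol col_setcol_neq.
Qed.

Lemma Fcol_shear_sum V i x (c : 'I_n -> R) :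
  Fcol (setcol V i (x + \sum_(j | j != i) c j *: col j V)) = Fcol (setcol V i x).
Proof.
elim/big_rec: _ x => [|j y ji IH] x; first by rewrite addr0.
by rewrite addrA IH Fcol_shear.
Qed.


Lemma Fcol_singular V : \det V = 0 -> Fcol V = 0.
Proof.
move=> /det0_col_dependent[i [c Vi]].
rewrite -(setcol_col V i) Vi -[X in setcol V i X]add0r Fcol_shear_sum.
by apply: (Fcol_col0 (i := i)); rewrite col_setcol.
Qed.

Lemma Fcol_setcol_unit V i x :
  V \in unitmx -> Fcol (setcol V i x) = ((invmx V *m x) i 0) ^+ 2 * Fcol V.
Proof.
move=> V_unit; rewrite -{1}(mulKVmx V_unit x) mulmx_col_sum (bigD1 i) //=.
by rewrite Fcol_shear_sum Fcol_scale setcol_col.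
Qed.

(* Column swap as three shears and a sign change. *)
Lemma Fcol_xcol V i k : Fcol (xcol i k V) = Fcol V.
Proof.
have [<-|ik] := eqVneq i k.
  by congr Fcol; apply: eq_col_matrix => j; rewrite col_xcol tperm1 perm1.
have ki : k != i by rewrite eq_sym.
have shear_i x y t : Fcol (setcol (setcol V i (x + t *: y)) k y) =
                     Fcol (setcol (setcol V i x) k y).
  have := @Fcol_shear (setcol V k y) i k x t ki.
  by rewrite col_setcol !(setcolC _ _ _ ik).
have shear_k x y t : Fcol (setcol (setcol V i x) k (y + t *: x)) =
                     Fcol (setcol (setcol V i x) k y).
  by have := @Fcol_shear (setcol V i x) k i y t ik; rewrite col_setcol.
set a := col i V; set b := col k V.
rewrite xcol_setcol -/a -/b.
transitivity (Fcol (setcol (setcol V i b) k (- a))).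
  by rewrite -[- a]scaleN1r Fcol_scale sqrrN expr1n mul1r.
transitivity (Fcol (setcol (setcol V i (a + b)) k (- a))).
  by rewrite -(shear_i b (- a) (-1)) scaleN1r opprK addrC.
transitivity (Fcol (setcol (setcol V i (a + b)) k b)).
  by rewrite -(shear_k (a + b) (- a) 1) scale1r addKr.
by rewrite -[b in a + b]scale1r shear_i /a /b !setcol_col.
Qed.

Definition det_defect V := Fcol V - Fcol 1%:M * \det V ^+ 2.

Lemma det_defect_singular V : \det V = 0 -> det_defect V = 0.
Proof. by move=> V0; rewrite /det_defect Fcol_singular // V0 expr0n mulr0 subr0. Qed.

Lemma det_defect_setcol_unit V i x :
  V \in unitmx -> det_defect (setcol V i x) = ((invmx V *m x) i 0) ^+ 2 * det_defect V.
Proof. by move=> V_unit; rewrite /det_defect Fcol_setcol_unit // det_setcol //; ring. Qed.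

Lemma det_defect_xcol V i k : det_defect (xcol i k V) = det_defect V.
Proof.
by rewrite /det_defect Fcol_xcol xcolE det_mulmx det_perm exprMn sqrr_sign mulr1.
Qed.

(* Induction on the number [m] of leading columns that may differ from those of
   the identity: a pivot and a column swap bring the next one into place. *)
Lemma det_defect_eq0 V : det_defect V = 0.
Proof.
suff tail_identity m W : (forall j : 'I_n, (m <= j)%N -> col j W = col j 1%:M) ->
    det_defect W = 0.
  by apply: (tail_identity n) => j; rewrite leqNgt ltn_ord.
elim: m W => [|m IH] W W_tail.
  have -> : W = 1%:M by apply: eq_col_matrix => j; apply: W_tail.
  by rewrite /det_defect det1 expr1n mulr1 subrr.
have [nm|mn] := ltnP m n; last first.
  by apply: IH => j mj; move: (leq_trans mn mj); rewrite leqNgt ltn_ord.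
pose k := Ordinal nm.
have [W0|W_neq0] := eqVneq (\det W) 0; first exact: det_defect_singular.
have W_unit : W \in unitmx by rewrite unitmxE unitfE.
have [i ik ci_neq0] := @unitmx_tail_pivot _ _ W k W_unit W_tail.
pose W' := setcol W i (col k 1%:M).
have W'_unit : W' \in unitmx by rewrite unitmxE unitfE det_setcol // mulf_neq0.
have -> : W = setcol W' i (col i W) by rewrite setcolK setcol_col.
rewrite det_defect_setcol_unit // -(det_defect_xcol W' i k) IH ?mulr0 // => j mj.
rewrite col_xcol; have [->|jk] := eqVneq j k; first by rewrite tpermR col_setcol.
have kj : (k < j)%N.
  by rewrite ltn_neqAle mj andbT; apply: contra jk => /eqP kj; apply/eqP/val_inj.
have ij : (i < j)%N := leq_ltn_trans ik kj.
by rewrite tpermD ?col_setcol_neq ?W_tail // -val_eqE /= neq_ltn ?ij ?kj ?orbT.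
Qed.

Lemma Fcol_det V : Fcol V = Fcol 1%:M * \det V ^+ 2.
Proof. by apply/eqP; rewrite -subr_eq0; apply/eqP/det_defect_eq0. Qed.

End RankOneFamilies.

Section MixedDiscriminant.
Variables (R : realType) (n : nat).
Implicit Types (A : 'I_n -> 'M[R]_n) (V : 'M[R]_n).

Lemma mixed_discr_outer_cols V : mixed_discr (outer_cols V) = (n`!%:R)^-1 * \det V ^+ 2.
Proof.
rewrite /mixed_discr expr2; congr (_ * _).
have det_term (s : 'S_n) : \det (\matrix_(i, j) outer_cols V (s j) i j) =
    \det V * ((-1) ^+ s * \prod_j V j (s j)).
  have -> : \matrix_(i, j) outer_cols V (s j) i j =
            col_perm s V *m diag_mx (\row_j V j (s j)).
    by rewrite mul_mx_diag; apply/matrixP => a b; rewrite !mxE big_ord1 !mxE.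
  rewrite det_mulmx det_diag col_permE det_mulmx det_perm odd_permV -mulrA.
  by congr (_ * (_ * _)); apply: eq_bigr => j _; rewrite mxE.
by rewrite (eq_bigr _ (fun s _ => det_term s)) -mulr_sumr.
Qed.

Lemma mixed_discr_updD A k B C :
  mixed_discr (upd A k (B + C)) = mixed_discr (upd A k B) + mixed_discr (upd A k C).
Proof.
rewrite /mixed_discr -mulrDr -big_split; congr (_ * _); apply: eq_bigr => s _ /=.
set M := fun X => \matrix_(i, j) upd A k X (s j) i j.
rewrite -!(det_tr (M _)).
have := @determinant_multilinear R n (M (B + C))^T (M B)^T (M C)^T ((s^-1)%g k) 1 1.
rewrite !mul1r; apply; rewrite ?scale1r.
  apply/rowP => j; rewrite !mxE /upd (permKV s k).
  by case: eqP => // _; rewrite !mxE.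
all: apply/matrixP => a b; rewrite !mxE /upd; case: eqP => // /(congr1 (s^-1)%g).
all: by rewrite permK => /eqP; rewrite eq_sym (negPf (neq_lift _ _)).
Qed.

Lemma multiadditive_mixed_discr (a : R) : multiadditive (fun A => a * mixed_discr A).
Proof. by move=> A k B C _ _ _; rewrite mixed_discr_updD mulrDr. Qed.

End MixedDiscriminant.

Unset Implicit Arguments.

Theorem theorem2 (R : realType) (n : nat) (F : ('I_n -> 'M[R]_n) -> R) :
  (0 < n)%N ->
  (* (i) nonnegativity *)
  (forall A : 'I_n -> 'M[R]_n, (forall k, psd (A k)) -> 0 <= F A) ->
  (* (ii) additivity in each variable *)
  (forall (A : 'I_n -> 'M[R]_n) (i : 'I_n) (B C : 'M[R]_n),
      (forall k, psd (A k)) -> psd B -> psd C ->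
      F (upd A i (B + C)) = F (upd A i B) + F (upd A i C)) ->
  (* (iii) vanishing on two proportional rank-one arguments *)
  (forall (A : 'I_n -> 'M[R]_n) (i j : 'I_n),
      (forall k, psd (A k)) -> i != j ->
      \rank (A i) = 1%N -> \rank (A j) = 1%N ->
      (exists c : R, A i = c *: A j) ->
      F A = 0) ->
  exists a : R, 0 <= a /\
    forall A : 'I_n -> 'M[R]_n, (forall k, psd (A k)) -> F A = a * mixed_discr A.
Proof.
move=> _ F_ge0 F_add F_van.
exists (Fcol F 1%:M * n`!%:R); split; first by rewrite mulr_ge0 ?Fcol_ge0.
apply: multiadditive_eq_on_rank_one => // [|V]; first exact: multiadditive_mixed_discr.
have fact_neq0 : n`!%:R != 0 :> R by rewrite pnatr_eq0 -lt0n fact_gt0.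
by rewrite mixed_discr_outer_cols mulrA mulfK // -(Fcol_det F_ge0 F_add F_van).
Qed.
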